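(* If the group $\mathrm{rot}(\mathcal G)=\{\mathrm{rot}(g):g\in\mathcal G\}$ is finite, then $U_{\mathrm{iso},0,0}\subset U_{\mathrm{per}}$.
   Context: Euclidean group: $\mathrm E(n)$ consists of pairs $(A|b)$, $A\in\mathrm O(n)$, $b\in\mathbb R^n$, acting by $(A|b)\cdot x=Ax+b$, product $(A_1|b_1)(A_2|b_2)=(A_1A_2|b_1+A_1b_2)$; $\mathrm{rot}(A|b)=A$. Standing setting: $d=d_1+d_2$; $\mathcal S<\mathrm E(d_2)$ is a space group with translation subgroup $\mathcal T_{\mathcal S}$; $A\oplus(B|b)=(\mathrm{diag}(A,B)|(0,b))$; $\mathcal G$ is a discrete subgroup of $\mathrm E(d)$ contained in $\{A\oplus s:A\in\mathrm O(d_1),s\in\mathcal S\}$ projecting onto $\mathcal S$; $\mathcal T\subset\mathcal G$ maps bijectively onto $\mathcal T_{\mathcal S}$ under the projection. There is $m_0\in\mathbb N$ such that $\mathcal T^N=\{t^N:t\in\mathcal T\}$ is a normal subgroup of $\mathcal G$ iff $N\in\mathcal M=m_0\mathbb N$. $U_{\mathrm{per}}$: maps $u:\mathcal G\to\mathbb R^d$ with $u(gt)=u(g)$ for all $g\in\mathcal G$, $t\in\mathcal T^N$, for some $N\in\mathcal M$. $x_0\in\mathbb R^d$ with $g\mapsto g\cdot x_0$ injective; $d_{\mathrm{aff}}=\dim\mathrm{aff}(\mathcal G\cdot x_0)$; assumed $\mathcal G\cdot x_0\subset\{0_{d-d_{\mathrm{aff}}}\}\times\mathbb R^{d_{\mathrm{aff}}}$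 and $\mathcal G$ acts trivially on $\mathbb R^{d-d_{\mathrm{aff}}}\times\{0\}$. $U_{\mathrm{iso},0,0}$ is the set of maps $u:\mathcal G\to\mathbb R^d$ for which there exist $a\in\mathbb R^d$ and $S\in\mathrm{Skew}(d_1)$ with $\mathrm{rot}(g)u(g)=a+(S\oplus0_{d_2\times d_2})(g\cdot x_0-x_0)$ for all $g\in\mathcal G$. *)

From HB Require Import structures.
From mathcomp Require Import all_boot all_order all_algebra.
From mathcomp Require Import classical_sets cardinality reals.
Set Implicit Arguments.
Unset Strict Implicit.
Unset Printing Implicit Defensive.
Import Order.TTheory GRing.Theory Num.Theory.
Local Open Scope ring_scope.
Local Open Scope classical_set_scope.

Section Euclid.
Variable R : realType.

Definition orthmx n (A : 'M[R]_n) : Prop := A *m A^T = 1%:M.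

(* An element (A|b) of E(n) is represented as the pair (A, b); *)
(* membership in E(n) additionally requires A to be orthogonal. *)
Definition euc n := ('M[R]_n * 'cV[R]_n)%type.

Definition euc_rot n (g : euc n) : 'M[R]_n := g.1.
Definition is_euc n (g : euc n) : Prop := orthmx g.1.

Definition act n (g : euc n) (x : 'cV[R]_n) : 'cV[R]_n := g.1 *m x + g.2.

Definition euc_id n : euc n := (1%:M, 0).
Definition euc_mul n (g h : euc n) : euc n := (g.1 *m h.1, g.2 + g.1 *m h.2).
(* inverse of (A|b) with A orthogonal: (A^T | - A^T b) *)
Definition euc_inv n (g : euc n) : euc n := (g.1^T, - (g.1^T *m g.2)).
Definition euc_pow n (g : euc n) (N : nat) : euc n := iter N (euc_mul g) (euc_id n).

Definition is_subgroup n (G : set (euc n)) : Prop :=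
  [/\ G `<=` @is_euc n, G (euc_id n),
      (forall g h, G g -> G h -> G (euc_mul g h)) &
      (forall g, G g -> G (euc_inv g))].

Definition is_discrete n (G : set (euc n)) : Prop :=
  exists2 eps : R, 0 < eps &
    forall g, G g ->
      (forall i j, `|g.1 i j - (1%:M : 'M[R]_n) i j| < eps) ->
      (forall i, `|g.2 i 0| < eps) -> g = euc_id n.

Definition transl_subgroup n (S : set (euc n)) : set (euc n) :=
  [set s | S s /\ s.1 = 1%:M].

Definition is_space_group n (S : set (euc n)) : Prop :=
  [/\ is_subgroup S, is_discrete S &
      exists2 B : 'M[R]_n, B \in unitmx &
        transl_subgroup S =
          [set s | exists k : 'cV[int]_n, s = (1%:M, B *m map_mx intr k)]].

Definition oplus d1 d2 (A : 'M[R]_d1) (s : euc d2) : euc (d1 + d2) :=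
  (block_mx A 0 0 s.1, col_mx 0 s.2).

Definition proj d1 d2 (g : euc (d1 + d2)) : euc d2 :=
  (drsubmx g.1, dsubmx g.2).

Definition is_normal_subgroup n (H G : set (euc n)) : Prop :=
  [/\ is_subgroup H, H `<=` G &
      forall g h, G g -> H h -> H (euc_mul (euc_mul g h) (euc_inv g))].

Definition powset n (T : set (euc n)) (N : nat) : set (euc n) :=
  [set euc_pow t N | t in T].

(* dim aff(G . x0) = k : the differences g.x0 - x0 (g in G) span a *)
(* k-dimensional space, i.e. k of them are linearly independent and *)
(* no k+1 of them are. *)
Definition diffs_mx n k (f : 'I_k -> euc n) (x0 : 'cV[R]_n) : 'M[R]_(k, n) :=
  \matrix_(i < k) (act (f i) x0 - x0)^T.

Definition aff_dim_orbit n (G : set (euc n)) (x0 : 'cV[R]_n) (k : nat) : Prop :=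
  (exists f : 'I_k -> euc n, (forall i, G (f i)) /\ row_free (diffs_mx f x0)) /\
  (forall f : 'I_k.+1 -> euc n, (forall i, G (f i)) -> ~~ row_free (diffs_mx f x0)).

Definition U_per n (G T : set (euc n)) (m0 : nat) (u : euc n -> 'cV[R]_n) : Prop :=
  exists N : nat, [/\ (0 < N)%N, (m0 %| N)%N &
    forall g t, G g -> powset T N t -> u (euc_mul g t) = u g].

Definition U_iso00 d1 d2 (G : set (euc (d1 + d2))) (x0 : 'cV[R]_(d1 + d2))
    (u : euc (d1 + d2) -> 'cV[R]_(d1 + d2)) : Prop :=
  exists (a : 'cV[R]_(d1 + d2)) (S : 'M[R]_d1), S^T = - S /\
    forall g, G g ->
      euc_rot g *m u g = a + block_mx S 0 0 (0 : 'M[R]_d2) *m (act g x0 - x0).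

End Euclid.

(* A finite point group has an exponent e, so for N = m0 e the N-th power t of
   any element of T is a pure translation (0, c) living in the R^d2 block.
   Then g t moves x0 to g.x0 + rot(g)(0, c), and rot(g)(0, c) again lies in
   the R^d2 block, which S (+) 0 annihilates; hence rot(g) u(g t) = rot(g) u(g)
   and u(g t) = u(g) since rot(g) is invertible. *)

From HB Require Import structures.
From mathcomp Require Import all_boot all_order all_algebra.
From mathcomp Require Import classical_sets cardinality reals.
Import Order.TTheory GRing.Theory Num.Theory.
Local Open Scope ring_scope.
Local Open Scope classical_set_scope.
Set Implicit Arguments.
Unset Strict Implicit.

Lemma seq_collision (T : eqType) (f : nat -> T) (s : seq T) :
  (forall k, f k \in s) -> exists i j, (i < j <= size s)%N /\ f i = f j.
Proof.
move=> fs; have : ~~ uniq (map f (iota 0 (size s).+1)).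
  apply/negP => /uniq_leq_size le_s.
  have /le_s : {subset map f (iota 0 (size s).+1) <= s}.
    by move=> x /mapP [k _ ->].
  by rewrite size_map size_iota ltnn.
case/(uniqPn (f 0)) => i [j [lt_ij]]; rewrite size_map size_iota => lt_j.
have lt_i := ltn_trans lt_ij lt_j.
rewrite !(nth_map 0) ?size_iota // !nth_iota // !add0n => fij.
by exists i, j; rewrite lt_ij -ltnS lt_j.
Qed.

Section MatrixPowers.
Variables (R : pzRingType) (n : nat).
Implicit Types M N : 'M[R]_n.

Definition mxpow M k := iter k (mulmx M) 1%:M.

Lemma mxpowS M k : mxpow M k.+1 = M *m mxpow M k.
Proof. by []. Qed.

Lemma mxpowD M p q : mxpow M (p + q) = mxpow M p *m mxpow M q.
Proof. by elim: p => [|p IH]; rewrite ?mul1mx // addSn !mxpowS IH mulmxA. Qed.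

Lemma mxpowSr M k : mxpow M k.+1 = mxpow M k *m M.
Proof. by rewrite -addn1 mxpowD mxpowS mulmx1. Qed.

Lemma mxpow1 k : mxpow 1%:M k = 1%:M.
Proof. by elim: k => [|k IH] //; rewrite mxpowS IH mul1mx. Qed.

Lemma mxpowM M p q : mxpow M (p * q) = mxpow (mxpow M p) q.
Proof. by elim: q => [|q IH]; rewrite ?muln0 // mulnS mxpowD IH. Qed.

Lemma mxpow_rinv M N k : M *m N = 1%:M -> mxpow M k *m mxpow N k = 1%:M.
Proof.
move=> MN1; elim: k => [|k IH]; first by rewrite mul1mx.
by rewrite mxpowSr mxpowS mulmxA -(mulmxA _ M) MN1 mulmx1 IH.
Qed.

(* Two exponents i < j <= size s collide, so M^(j - i) = 1 with j - i dividing
   (size s)!. *)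
Lemma mxpow_fact_eq1 M N (s : seq 'M[R]_n) :
  M *m N = 1%:M -> (forall k, mxpow M k \in s) -> mxpow M (size s)`! = 1%:M.
Proof.
move=> MN1 /seq_collision [i [j [/andP [lt_ij le_js] Mij]]].
have order : mxpow M (j - i) = 1%:M.
  have MNi := mxpow_rinv i MN1.
  rewrite -[LHS]mulmx1 -{1}MNi mulmxA -mxpowD subnK; last exact: ltnW.
  by rewrite -Mij.
have /dvdnP [q ->] : (j - i %| (size s)`!)%N.
  by apply: dvdn_fact; rewrite subn_gt0 lt_ij (leq_trans (leq_subr _ _)).
by rewrite mulnC mxpowM order mxpow1.
Qed.

End MatrixPowers.

Section Euclidean.
Variable R : realType.

Lemma euc_pow_rot n (g : euc R n) k : (euc_pow g k).1 = mxpow g.1 k.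
Proof. by elim: k => [|k IH] //=; rewrite -IH. Qed.

Lemma act_mul n (g h : euc R n) x : act (euc_mul g h) x = act g (act h x).
Proof. by rewrite /act /= mulmxDr mulmxA addrAC addrA. Qed.

Lemma subgroup_pow n (G : set (euc R n)) g k :
  is_subgroup G -> G g -> G (euc_pow g k).
Proof. by case=> _ G1 GM _ Gg; elim: k => [|k IH] //=; apply: GM. Qed.

Lemma finite_rot_exponent n (G : set (euc R n)) :
  is_subgroup G -> finite_set (@euc_rot R n @` G) ->
  exists2 e, (0 < e)%N & forall g, G g -> mxpow g.1 e = 1%:M.
Proof.
move=> HG /finite_seqP [s rotG]; exists (size s)`!; first exact: fact_gt0.
move=> g Gg; have [orth _ _ _] := HG.
apply: (mxpow_fact_eq1 (orth g Gg)) => k.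
have : (@euc_rot R n @` G) (mxpow g.1 k).
  by exists (euc_pow g k); [exact: subgroup_pow | exact: euc_pow_rot].
by rewrite rotG.
Qed.

Variables d1 d2 : nat.

Lemma oplus1 : oplus 1%:M (euc_id R d2) = euc_id R (d1 + d2).
Proof. by rewrite /oplus /euc_id /= col_mx0 -scalar_mx_block. Qed.

Lemma oplus_mul (A B : 'M[R]_d1) (s t : euc R d2) :
  euc_mul (oplus A s) (oplus B t) = oplus (A *m B) (euc_mul s t).
Proof.
rewrite /euc_mul /oplus /= mulmx_block mul_block_col add_col_mx.
by rewrite !mul0mx !mulmx0 !addr0 !add0r.
Qed.

Lemma euc_pow_oplus (A : 'M[R]_d1) (s : euc R d2) k :
  euc_pow (oplus A s) k = oplus (mxpow A k) (euc_pow s k).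
Proof. by elim: k => [|k IH] /=; rewrite ?oplus1 // IH oplus_mul. Qed.

Lemma skew_block_oplus_lower (Sk A : 'M[R]_d1) (s : euc R d2) (c : 'cV[R]_d2) :
  block_mx Sk 0 0 (0 : 'M[R]_d2) *m ((oplus A s).1 *m col_mx 0 c) = 0.
Proof.
by rewrite /oplus /= !mul_block_col !mul0mx !mulmx0 !addr0 mulmx0 col_mx0.
Qed.

Lemma iso00_mul_transl_invariant (G : set (euc R (d1 + d2))) x0
    (u : euc R (d1 + d2) -> 'cV[R]_(d1 + d2)) a (Sk A : 'M[R]_d1) (s : euc R d2)
    (c : 'cV[R]_d2) g :
  (forall g, G g ->
     euc_rot g *m u g = a + block_mx Sk 0 0 (0 : 'M[R]_d2) *m (act g x0 - x0)) ->
  G g -> G (euc_mul g (1%:M, col_mx 0 c)) -> orthmx g.1 -> g = oplus A s ->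
  u (euc_mul g (1%:M, col_mx 0 c)) = u g.
Proof.
set t := (1%:M, _) => Hu Gg Ggt orth gE.
have rot_gt : euc_rot (euc_mul g t) = euc_rot g by rewrite /euc_rot /= mulmx1.
have shift : act (euc_mul g t) x0 - x0 = (act g x0 - x0) + g.1 *m col_mx 0 c.
  by rewrite act_mul /act /= mul1mx mulmxDr (addrAC (g.1 *m x0)) [RHS]addrAC.
have := Hu _ Ggt; rewrite rot_gt shift mulmxDr gE skew_block_oplus_lower addr0.
rewrite -gE -Hu // => /(congr1 (mulmx g.1^T)).
by rewrite !mulmxA /euc_rot (mulmx1C orth) !mul1mx.
Qed.

End Euclidean.

Theorem lemma3p26 (R : realType) (d1 d2 : nat)
  (S : set (euc R d2)) (G T : set (euc R (d1 + d2))) (m0 : nat)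
  (x0 : 'cV[R]_(d1 + d2)) (daff : nat)
  (* standing setting *)
  (HS : is_space_group S)
  (HGsub : is_subgroup G) (HGdisc : is_discrete G)
  (HGform : forall g, G g ->
     exists A : 'M[R]_d1, exists s : euc R d2, [/\ orthmx A, S s & g = oplus A s])
  (HGonto : forall s, S s -> exists2 g, G g & proj g = s)
  (HTsub : T `<=` G)
  (HTinj : forall t t', T t -> T t' -> proj t = proj t' -> t = t')
  (HTimg : (@proj R d1 d2) @` T = transl_subgroup S)
  (Hm0 : (0 < m0)%N)
  (HM : forall N : nat, (0 < N)%N -> (is_normal_subgroup (powset T N) G <-> (m0 %| N)%N))
  (Hx0 : forall g h, G g -> G h -> act g x0 = act h x0 -> g = h)
  (Hdaff : aff_dim_orbit G x0 daff)
  (Horb : forall g, G g -> forall i : 'I_(d1 + d2),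
     (i < d1 + d2 - daff)%N -> act g x0 i 0 = 0)
  (Htriv : forall g, G g -> forall x : 'cV[R]_(d1 + d2),
     (forall i : 'I_(d1 + d2), (d1 + d2 - daff <= i)%N -> x i 0 = 0) ->
     euc_rot g *m x = x)
  (* hypothesis of the lemma *)
  (Hfin : finite_set ((@euc_rot R (d1 + d2)) @` G)) :
  forall u : euc R (d1 + d2) -> 'cV[R]_(d1 + d2),
    U_iso00 G x0 u -> U_per G T m0 u.
Proof.
move=> u [a [Sk [_ Hu]]].
have [e e_gt0 rot_e] := finite_rot_exponent HGsub Hfin.
have [orth _ GM _] := HGsub.
exists (m0 * e)%N; split => [||g t Gg [t0 Tt0 <-]].
- by rewrite muln_gt0 Hm0.
- exact: dvdn_mulr.
have Gt0 := HTsub _ Tt0.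
have [A [s [_ _ t0E]]] := HGform _ Gt0.
have [B [s' [_ _ gE]]] := HGform _ Gg.
have Gt := subgroup_pow (m0 * e) HGsub Gt0.
have tE : euc_pow t0 (m0 * e) = (1%:M, col_mx 0 (euc_pow s (m0 * e)).2).
  rewrite [LHS]surjective_pairing euc_pow_rot mulnC mxpowM rot_e // mxpow1.
  by rewrite t0E euc_pow_oplus.
rewrite tE in Gt *.
exact: (iso00_mul_transl_invariant Hu Gg (GM _ _ Gg Gt) (orth _ Gg) gE).
Qed.
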